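(* Let $\mathcal G$ be a weighted timed game and $\rho=(s_1,r_1)\xrightarrow{\delta_1}(s_2,r_2)\xrightarrow{\delta_2}\cdots\xrightarrow{\delta_n}(s_{n+1},r_{n+1})=(s_1,r_1)$ a cycle of the region automaton $\mathcal R(\mathcal G)$. Let $\overline\pi=(s_1,\nu_0)\xrightarrow{d_1,\delta_1}(s_2,\nu_1)\cdots\xrightarrow{d_n,\delta_n}(s_1,\nu_n)$ be a finite play of the closed game $\overline{\mathcal G}$ following $\overline\rho$ and jumping from corners to corners, with $\nu_0,\nu_n$ corners of $r_1$. Then for every $\varepsilon>0$ there exists a finite play $\pi$ of $\mathcal G$ following $\rho$ such that $|\omega(\pi)-\omega(\overline\pi)|\le\varepsilon$.
   Context: Clocks $X$, valuations $\nu\colon X\to\mathbb R_{\ge0}$, time elapse $\nu+d$, reset $\nu[Y\leftarrow0]$; guards are conjunctions of $x\bowtie c$ with ${\bowtie}\in\{\le,<,=,>,\ge\}$, $c\in\mathbb N$. A weighted timed game $\mathcal G=\langle S=S_{\mathrm{Min}}\uplus S_{\mathrm{Max}},S_T,\Delta,\omega\rangle$ has finite states, finite transitions $\Delta\subseteq S\times\mathrm{Guards}(X)\times2^X\times S$, weights $\omega\colon\Delta\uplus S\to\mathbb Z$, and clocks bounded by $M\in\mathbb N$ (every guard implies $\nu(x)\le M$ for all $x$). A step $(s,\nu)\xrightarrow{d,\delta}(s',\nu')$ with $\delta=(s,g,Y,s')$ requires $d\ge0$, $\nu+d\models g$, $\nu'=(\nu+d)[Y\leftarrow0]$, and has weight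 $d\,\omega(s)+\omega(\delta)$; the weight $\omega(\cdot)$ of a finite play is the sum of its step weights. Regions: standard Alur–Dill regions for clocks $X$ and constant $M$; $[\nu]$ is the region of $\nu$; $\overline r$ is the topological closure of $r$; the corners of $r$ are the valuations in $\overline r\cap\mathbb N^X$. The region automaton $\mathcal R(\mathcal G)$ has states $(s,r)$ and transitions $(s,r)\xrightarrow{\delta}(s',r')$, $\delta=(s,g,Y,s')$, if some $\nu\in r$, $d\ge0$ satisfy $\nu+d\models g$ and $(\nu+d)[Y\leftarrow0]\in r'$; a cycle is a path whose first and last states coincide. A play of $\mathcal G$ follows a path if it fires the same transitions and its successive configurations $(s,\nu)$ have $(s,[\nu])$ equal to the successive states of the path. The closed game $\overline{\mathcal G}$ is $\mathcal G$ with every strict inequality in guards replaced by the corresponding non-strict one. The play $\overline\pi$ of $\overline{\mathcal G}$ follows $\overline\rho$ and jumps from corners to corners if, for each $i\in\{1,\dots,n\}$, writing $\delta_i=(s_i,g_i,Y_i,s_{i+1})$, there is a region $r_i''$ such that some valuation of $r_i$ reaches $r_i''$ by time elapse, $r_i''$ satisfies $g_i$, $r_i''[Y_i\leftarrow0]=r_{i+1}$, and $\nu_{i-1}\in\overline{r_i}$, $\nu_{i-1}+d_i\in\overline{r_i''}$, $\nu_i\in\overline{r_{i+1}}$, with all valuations $\nu_{i-1},\nu_{i-1}+d_i,\nu_i$ in $\mathbb N^X$ (hence $\omega(\overline\pi)\in\mathbb Z$). *)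

(* clocks X and states S are abstract types (finiteness stated as
   hypotheses), valuations are X -> R (Stdlib reals). *)
From Stdlib Require Import Reals Lra List ZArith.
Open Scope R_scope.

Set Implicit Arguments.

Definition valuation (X : Type) := X -> R.

Definition elapse {X : Type} (v : valuation X) (d : R) : valuation X :=
  fun x => v x + d.
Definition reset {X : Type} (v : valuation X) (Y : X -> bool) : valuation X :=
  fun x => if Y x then 0 else v x.

Inductive cmp := CLt | CLe | CEq | CGe | CGt.

Definition guard (X : Type) := list (X * cmp * nat).

Definition sat_atom {X : Type} (v : valuation X) (a : X * cmp * nat) : Prop :=
  let '(x, o, c) := a in
  match o with
  | CLt => v x < INR c
  | CLe => v x <= INR c
  | CEq => v x = INR c
  | CGe => v x >= INR c
  | CGt => v x > INR c
  end.

Definition sat {X : Type} (g : guard X) (v : valuation X) : Prop :=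
  forall a, In a g -> sat_atom v a.

Definition close_cmp (o : cmp) : cmp :=
  match o with CLt => CLe | CGt => CGe | o => o end.
Definition close_guard {X : Type} (g : guard X) : guard X :=
  map (fun '(x, o, c) => (x, close_cmp o, c)) g.

Record trans (X St : Type) := Trans {
  tsrc : St; tguard : guard X; treset : X -> bool; tdst : St }.

(* weighted timed game; the partition S = S_Min + S_Max is given by [is_min],
   targets by [is_target]; [bound] is the clock bound M *)
Record wtg (X St : Type) := WTG {
  is_min : St -> bool;
  is_target : St -> bool;
  Delta : list (trans X St);
  wtrans : trans X St -> Z;
  wstate : St -> Z;
  bound : nat }.

Definition well_formed {X St : Type} (G : wtg X St) : Prop :=
  (exists l : list St, forall s, In s l) /\
  (forall t, In t (Delta G) -> forall v, sat (tguard t) v ->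
     forall x, v x <= INR (bound G)).

Definition floorR (a : R) : Z := Int_part a.
Definition fracR (a : R) : R := frac_part a.

Definition nonneg {X : Type} (v : valuation X) : Prop := forall x, 0 <= v x.

Definition region_equiv {X : Type} (M : nat) (v v' : valuation X) : Prop :=
  (forall x,
     (v x > INR M /\ v' x > INR M) \/
     (floorR (v x) = floorR (v' x) /\ (fracR (v x) = 0 <-> fracR (v' x) = 0))) /\
  (forall x y, v x <= INR M -> v y <= INR M ->
     (fracR (v x) <= fracR (v y) <-> fracR (v' x) <= fracR (v' y))).

Definition region (X : Type) := valuation X -> Prop.

Definition is_region {X : Type} (M : nat) (r : region X) : Prop :=
  exists v, nonneg v /\ forall v', r v' <-> (nonneg v' /\ region_equiv M v v').

Definition closure {X : Type} (r : region X) (v : valuation X) : Prop :=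
  forall e, e > 0 -> exists v', r v' /\ forall x, Rabs (v x - v' x) < e.

Definition integral {X : Type} (v : valuation X) : Prop :=
  forall x, exists k : nat, v x = INR k.

Definition corner {X : Type} (r : region X) (v : valuation X) : Prop :=
  closure r v /\ integral v.

Definition region_trans {X St : Type} (G : wtg X St)
  (s : St) (r : region X) (t : trans X St) (s' : St) (r' : region X) : Prop :=
  In t (Delta G) /\ tsrc t = s /\ tdst t = s' /\
  exists v d, r v /\ d >= 0 /\ sat (tguard t) (elapse v d) /\
              r' (reset (elapse v d) (treset t)).

Definition is_cycle {X St : Type} (G : wtg X St) (n : nat)
  (s : nat -> St) (r : nat -> region X) (t : nat -> trans X St) : Prop :=
  (forall i, (i <= n)%nat -> is_region (bound G) (r i)) /\
  (forall i, (i < n)%nat -> region_trans G (s i) (r i) (t i) (s (S i)) (r (S i))) /\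
  s n = s O /\ r n = r O.

Definition step_guard {X St : Type} (closed : bool) (t : trans X St) : guard X :=
  if closed then close_guard (tguard t) else tguard t.

Definition step {X St : Type} (G : wtg X St) (closed : bool)
  (s : St) (v : valuation X) (d : R) (t : trans X St) (s' : St) (v' : valuation X) : Prop :=
  In t (Delta G) /\ tsrc t = s /\ tdst t = s' /\ d >= 0 /\
  sat (step_guard closed t) (elapse v d) /\ v' = reset (elapse v d) (treset t).

Definition is_play {X St : Type} (G : wtg X St) (closed : bool) (n : nat)
  (s : nat -> St) (t : nat -> trans X St) (nu : nat -> valuation X) (d : nat -> R) : Prop :=
  forall i, (i < n)%nat -> step G closed (s i) (nu i) (d i) (t i) (s (S i)) (nu (S i)).

Fixpoint play_weight {X St : Type} (G : wtg X St) (n : nat)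
  (s : nat -> St) (t : nat -> trans X St) (d : nat -> R) : R :=
  match n with
  | O => 0
  | S m => play_weight G m s t d + (d m * IZR (wstate G (s m)) + IZR (wtrans G (t m)))
  end.

Definition follows {X : Type} (n : nat) (r : nat -> region X) (nu : nat -> valuation X) : Prop :=
  forall i, (i <= n)%nat -> r i (nu i).

Definition follows_corners {X St : Type} (G : wtg X St) (n : nat)
  (r : nat -> region X) (t : nat -> trans X St) (nu : nat -> valuation X) (d : nat -> R) : Prop :=
  forall i, (i < n)%nat ->
    exists r'' : region X,
      is_region (bound G) r'' /\
      (exists v e, r i v /\ e >= 0 /\ r'' (elapse v e)) /\
      (forall v, r'' v -> sat (tguard (t i)) v) /\
      (forall v', r (S i) v' <-> exists v, r'' v /\ v' = reset v (treset (t i))) /\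
      closure (r i) (nu i) /\ closure r'' (elapse (nu i) (d i)) /\
      closure (r (S i)) (nu (S i)) /\
      integral (nu i) /\ integral (elapse (nu i) (d i)) /\ integral (nu (S i)).

From Pilot Require Import Defs.
From Stdlib Require Import Reals List ZArith Lra Lia.
From Stdlib Require Import FunctionalExtensionality Classical ClassicalEpsilon.
Open Scope R_scope.

(* Near an integral valuation c, the region containing c + u, for u small, only
   depends on how the coordinates of u are ordered among themselves and relative
   to 0.  A point of a region r can be slid towards a corner c of r along the segment
   without leaving r; doing so with the same ratio to a step of G yields, for each
   transition of the corner play, a step of G from near c to near c + d.
   The play of G is built transition by transition.  If its valuation is c + g with
   |g| <= k, the delay d + h is chosen so that -h sits among the coordinates of g as
   the delay offset of the scaled step sits among the coordinates of its start; then
   the elapsed valuation lies in the region of the scaled one.  This is possible with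
   |h| <= 2k, so the distance to the corner play at most triples per transition, and
   delays, hence weights, stay as close as wanted if the play starts close enough to
   the first corner. *)

Lemma floorR_spec (a : R) : IZR (floorR a) <= a < IZR (floorR a) + 1.
Proof. unfold floorR. destruct (base_Int_part a). lra. Qed.

Lemma floorR_unique (a : R) (z : Z) : IZR z <= a < IZR z + 1 -> floorR a = z.
Proof.
  intro Hz. pose proof (floorR_spec a).
  assert (H1 : IZR z < IZR (floorR a + 1)) by (rewrite plus_IZR; lra).
  assert (H2 : IZR (floorR a) < IZR (z + 1)) by (rewrite plus_IZR; lra).
  apply lt_IZR in H1, H2. lia.
Qed.

Lemma fracR_floor (a : R) : fracR a = a - IZR (floorR a).
Proof. reflexivity. Qed.

Lemma fracR_unique (a : R) (z : Z) : IZR z <= a < IZR z + 1 -> fracR a = a - IZR z.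
Proof. intro Hz. rewrite fracR_floor, (floorR_unique a z Hz). reflexivity. Qed.

Lemma gt_nat_same_floor (M : nat) (a b : R) :
  floorR a = floorR b -> (fracR a = 0 <-> fracR b = 0) -> INR M < a -> INR M < b.
Proof.
  intros Hf Hz Ha. rewrite INR_IZR_INZ in *.
  pose proof (floorR_spec a). pose proof (floorR_spec b) as Sb.
  assert (HM : (Z.of_nat M <= floorR a)%Z).
  { apply Z.lt_succ_r, lt_IZR. rewrite succ_IZR. lra. }
  apply IZR_le in HM. rewrite Hf in HM.
  destruct (Req_dec b (IZR (Z.of_nat M))) as [Eb|]; [exfalso|lra].
  assert (Fb : floorR b = Z.of_nat M) by (apply floorR_unique; lra).
  assert (Hb0 : fracR b = 0) by (rewrite fracR_floor, Fb; lra).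
  apply Hz in Hb0. rewrite fracR_floor, Hf, Fb in Hb0. lra.
Qed.

Lemma region_clock_le (M : nat) (a b : R) :
  (a > INR M /\ b > INR M) \/ (floorR a = floorR b /\ (fracR a = 0 <-> fracR b = 0)) ->
  b <= INR M -> floorR a = floorR b /\ (fracR a = 0 <-> fracR b = 0) /\ a <= INR M.
Proof.
  intros [[Ha Hb]|[Hf Hz]] Hle; [lra|]. split; [exact Hf|]. split; [exact Hz|].
  destruct (Rle_or_lt a (INR M)) as [|Ha]; [assumption|].
  pose proof (gt_nat_same_floor M a b Hf Hz Ha). lra.
Qed.

Lemma segment_clock (k : nat) (p q lam : R) :
  floorR p = floorR q -> (fracR p = 0 <-> fracR q = 0) -> Rabs (INR k - q) < 1/2 ->
  0 < lam <= 1 ->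
  let v := INR k + lam * (p - INR k) in
  (floorR v = floorR p /\ fracR v = lam * fracR p /\ fracR q < 1/2) \/
  (floorR v = floorR p /\ fracR v = 1 - lam + lam * fracR p /\ 0 < fracR p /\ 1/2 < fracR q).
Proof.
  intros Hf Hz Hk Hl v.
  pose proof (floorR_spec p) as Bp. pose proof (floorR_spec q) as Bq. rewrite <- Hf in Bq.
  assert (Ep : fracR p = p - IZR (floorR p)) by apply fracR_floor.
  assert (Eq : fracR q = q - IZR (floorR p)) by (rewrite fracR_floor, Hf; reflexivity).
  apply Rabs_def2 in Hk. unfold v. rewrite INR_IZR_INZ in *.
  assert (Hk2 : (Z.of_nat k - floorR p < 2)%Z) by (apply lt_IZR; rewrite minus_IZR; lra).
  assert (Hk1 : (0 < Z.of_nat k - floorR p + 1)%Z)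
    by (apply lt_IZR; rewrite plus_IZR, minus_IZR; lra).
  assert (E : Z.of_nat k = floorR p \/ Z.of_nat k = (floorR p + 1)%Z) by lia.
  destruct E as [E|E]; rewrite E in *.
  - left. assert (0 <= lam * (p - IZR (floorR p)) < 1) by (split; nra).
    split; [|split].
    + apply floorR_unique; lra.
    + rewrite (fracR_unique _ (floorR p)), Ep by lra; ring.
    + rewrite Eq; lra.
  - right. rewrite plus_IZR in *.
    assert (Pp : IZR (floorR p) < p).
    { destruct (Rle_lt_or_eq_dec _ _ (proj1 Bp)) as [|E0]; [assumption|].
      exfalso. assert (H0 : fracR p = 0) by (rewrite Ep; lra).
      apply Hz in H0. rewrite Eq in H0. lra. }
    assert (0 < lam * (1 - (p - IZR (floorR p))) <= 1 - (p - IZR (floorR p))) by (split; nra).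
    split; [|split; [|split]].
    + apply floorR_unique; lra.
    + rewrite (fracR_unique _ (floorR p)), Ep by lra; ring.
    + rewrite Ep; lra.
    + rewrite Eq; lra.
Qed.

Definition frac_small (a : R) : R := if Rle_dec 0 a then a else 1 + a.

Lemma floor_frac_nat_add (k : nat) (a : R) : Rabs a < 1/2 ->
  floorR (INR k + a) = (Z.of_nat k - if Rle_dec 0 a then 0 else 1)%Z /\
  fracR (INR k + a) = frac_small a.
Proof.
  intro Ha. apply Rabs_def2 in Ha. unfold frac_small. rewrite INR_IZR_INZ.
  destruct (Rle_dec 0 a).
  - rewrite Z.sub_0_r. split; [apply floorR_unique|rewrite (fracR_unique _ (Z.of_nat k))]; lra.
  - assert (E : IZR (Z.of_nat k - 1) = IZR (Z.of_nat k) - 1) by apply minus_IZR.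
    split; [apply floorR_unique|rewrite (fracR_unique _ (Z.of_nat k - 1))]; rewrite ?E; lra.
Qed.

Lemma nat_add_small_floor_eq (k : nat) (a b : R) : Rabs a < 1/2 -> Rabs b < 1/2 ->
  floorR (INR k + a) = floorR (INR k + b) <-> (0 <= a <-> 0 <= b).
Proof.
  intros Ha Hb. rewrite (proj1 (floor_frac_nat_add k a Ha)), (proj1 (floor_frac_nat_add k b Hb)).
  destruct (Rle_dec 0 a), (Rle_dec 0 b); split; intro; (tauto || lia).
Qed.

Lemma frac_small_eq0 (a : R) : Rabs a < 1/2 -> frac_small a = 0 <-> a = 0.
Proof.
  intro Ha. apply Rabs_def2 in Ha. unfold frac_small.
  destruct (Rle_dec 0 a); split; intro; lra.
Qed.

Lemma frac_small_order (a b a' b' : R) :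
  Rabs a < 1/2 -> Rabs b < 1/2 -> Rabs a' < 1/2 -> Rabs b' < 1/2 ->
  (0 <= a <-> 0 <= a') -> (0 <= b <-> 0 <= b') ->
  (frac_small a <= frac_small b <-> frac_small a' <= frac_small b') <-> (a <= b <-> a' <= b').
Proof.
  intros Ha Hb Ha' Hb' Sa Sb.
  apply Rabs_def2 in Ha, Hb, Ha', Hb'. unfold frac_small.
  destruct (Rle_dec 0 a), (Rle_dec 0 b), (Rle_dec 0 a'), (Rle_dec 0 b'); intuition lra.
Qed.

Lemma Rabs_le_bounds (a k : R) : Rabs a <= k -> - k <= a <= k.
Proof. unfold Rabs. destruct (Rcase_abs a); lra. Qed.

Definition order_equiv {Y : Type} (u u' : Y -> R) : Prop :=
  forall y z, u y <= u z <-> u' y <= u' z.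

Definition with_pt {Y : Type} (u : Y -> R) (a : R) : option Y -> R :=
  fun o => match o with Some y => u y | None => a end.

Lemma order_equiv_sym {Y : Type} (u u' : Y -> R) : order_equiv u u' -> order_equiv u' u.
Proof. intros E y z. symmetry. apply E. Qed.

Lemma order_equiv_reindex {Y Y' : Type} (u u' : Y -> R) (w w' : Y' -> R) (f : Y' -> Y) (a a' : R) :
  order_equiv u u' -> (forall y, w y = u (f y) - a) -> (forall y, w' y = u' (f y) - a') ->
  order_equiv w w'.
Proof.
  intros E Hw Hw' y z. rewrite !Hw, !Hw'. specialize (E (f y) (f z)). intuition lra.
Qed.

Lemma exists_between {Y : Type} (ys : list Y) (f : Y -> R) (P Q : Y -> Prop) (lo hi : R) :
  lo < hi -> (forall y, P y -> f y < hi) -> (forall z, Q z -> lo < f z) ->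
  (forall y z, P y -> Q z -> f y < f z) ->
  exists a, lo < a < hi /\ forall y, In y ys -> (P y -> f y < a) /\ (Q y -> a < f y).
Proof.
  revert lo hi. induction ys as [|y ys IH]; intros lo hi Hlh HP HQ HPQ.
  - exists ((lo + hi) / 2). split; [lra|]. intros y [].
  - destruct (classic (P y)) as [Py|nPy]; [|destruct (classic (Q y)) as [Qy|nQy]].
    + destruct (IH (Rmax lo (f y)) hi) as [a [Ha Hys]]; auto.
      { apply Rmax_lub_lt; auto. }
      { intros z Qz. apply Rmax_lub_lt; auto. }
      exists a. pose proof (Rmax_l lo (f y)). pose proof (Rmax_r lo (f y)).
      split; [lra|]. intros z [->|Hz]; [|auto].
      split; [lra|]. intro Qz. pose proof (HPQ z z Py Qz). lra.
    + destruct (IH lo (Rmin hi (f y))) as [a [Ha Hys]]; auto.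
      { apply Rmin_glb_lt; auto. }
      { intros z Pz. apply Rmin_glb_lt; auto. }
      exists a. pose proof (Rmin_l hi (f y)). pose proof (Rmin_r hi (f y)).
      split; [lra|]. intros z [->|Hz]; [|auto].
      split; [tauto|lra].
    + destruct (IH lo hi) as [a [Ha Hys]]; auto.
      exists a. split; [exact Ha|]. intros z [->|Hz]; [tauto|auto].
Qed.

Lemma order_equiv_extend {Y : Type} (ys : list Y) (u u' : Y -> R) (k a' : R) :
  (forall y, In y ys) -> 0 < k -> (forall y, Rabs (u y) <= k) -> order_equiv u u' ->
  exists a, Rabs a <= 2 * k /\ order_equiv (with_pt u a) (with_pt u' a').
Proof.
  intros Hys Hk Hu E.
  destruct (classic (exists y0, u' y0 = a')) as [[y0 <-]|Hmiss].
  - exists (u y0). split; [pose proof (Hu y0); lra|].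
    intros [y|] [z|]; apply E.
  - assert (Bu : forall y, - k <= u y <= k).
    { intro y. apply Rabs_le_bounds, Hu. }
    destruct (exists_between ys u (fun y => u' y < a') (fun y => a' < u' y) (- (2 * k)) (2 * k))
      as [a [Ha Hsep]].
    + lra.
    + intros y _. pose proof (Bu y). lra.
    + intros z _. pose proof (Bu z). lra.
    + intros y z Hy Hz. destruct (Rlt_or_le (u y) (u z)) as [|Hle]; [assumption|].
      apply E in Hle. lra.
    + exists a. split; [apply Rabs_le; lra|].
      assert (Hcut : forall y, (u y <= a <-> u' y <= a') /\ (a <= u y <-> a' <= u' y)).
      { intro y. destruct (Hsep y (Hys y)) as [HP HQ].
        destruct (Rtotal_order (u' y) a') as [Hl|[He|Hg]].
        - specialize (HP Hl). split; split; intro; lra.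
        - exfalso. eauto.
        - specialize (HQ Hg). split; split; intro; lra. }
      intros [y|] [z|]; simpl; [apply E|apply Hcut|apply Hcut|split; intro; lra].
Qed.

Lemma Rabs_scale_le (lam a B : R) : 0 < lam -> Rabs a <= B -> Rabs (lam * a) <= lam * B.
Proof. intros Hl Ha. rewrite Rabs_mult, (Rabs_pos_eq lam) by lra. apply Rmult_le_compat_l; lra. Qed.

Section Cells.
Context {X : Type}.

Definition same_cell (v w : valuation X) : Prop :=
  (forall x, floorR (v x) = floorR (w x) /\ (fracR (v x) = 0 <-> fracR (w x) = 0)) /\
  (forall x y, fracR (v x) <= fracR (v y) <-> fracR (w x) <= fracR (w y)).

Definition bounded_region (M : nat) (r : region X) : Prop :=
  is_region M r /\ forall v, r v -> forall x, v x <= INR M.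

Lemma region_same_cell (M : nat) (r : region X) (v w : valuation X) :
  is_region M r -> r v -> same_cell v w -> Defs.nonneg w -> r w.
Proof.
  intros [b [_ Hr]] Hv [Sf So] Hw. apply Hr in Hv as [_ [Ef Eo]].
  apply Hr. split; [exact Hw|]. split.
  - intro x. destruct (Sf x) as [F Fz]. destruct (Ef x) as [[Hb Hvx]|[F' Fz']].
    + left. split; [exact Hb|]. exact (gt_nat_same_floor M _ _ F Fz Hvx).
    + right. split; [congruence|tauto].
  - intros x y Hx Hy. rewrite (Eo x y Hx Hy). apply So.
Qed.

Lemma bounded_region_same_cell (M : nat) (r : region X) (v w : valuation X) :
  bounded_region M r -> r v -> r w -> same_cell v w.
Proof.
  intros [[b [_ Hr]] Hbd] Hv Hw.
  pose proof (Hbd v Hv) as Bv. pose proof (Hbd w Hw) as Bw.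
  apply Hr in Hv as [_ [Vf Vo]]. apply Hr in Hw as [_ [Wf Wo]].
  pose proof (fun x => region_clock_le M _ _ (Vf x) (Bv x)) as Kv.
  pose proof (fun x => region_clock_le M _ _ (Wf x) (Bw x)) as Kw.
  split.
  - intro x. destruct (Kv x) as [A1 [A2 _]]. destruct (Kw x) as [C1 [C2 _]].
    split; [congruence|tauto].
  - intros x y. destruct (Kv x) as [_ [_ Bx]]. destruct (Kv y) as [_ [_ By]].
    rewrite <- (Vo x y Bx By). apply Wo; assumption.
Qed.

Lemma closure_dist (M : nat) (r : region X) (c v : valuation X) :
  bounded_region M r -> closure r c -> r v -> forall x, Rabs (v x - c x) <= INR M + 1.
Proof.
  intros [[b [_ Hr]] Hbd] Hcl Hv x.
  destruct (Hcl 1 ltac:(lra)) as [q [Hq Hcq]].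
  pose proof (Rabs_def2 _ _ (Hcq x)). pose proof (Hbd _ Hq x). pose proof (Hbd _ Hv x).
  pose proof (proj1 (proj1 (Hr q) Hq) x). pose proof (proj1 (proj1 (Hr v) Hv) x).
  apply Rabs_le. lra.
Qed.

(* A clock whose corner value is the integer above p x gets fractional part
   1 - lam + lam * frac (p x), the others lam * frac (p x); the former are the clocks
   with the largest fractional parts in r, so their order is preserved. *)
Lemma corner_segment (M : nat) (r : region X) (c p : valuation X) (lam : R) :
  bounded_region M r -> corner r c -> r p -> 0 < lam <= 1 ->
  r (fun x => c x + lam * (p x - c x)).
Proof.
  intros Hr [Hcl Hc] Hp Hl.
  destruct (Hcl (1/2) ltac:(lra)) as [q [Hq Hcq]].
  destruct (bounded_region_same_cell M r p q Hr Hp Hq) as [Sf So].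
  set (v := fun x => c x + lam * (p x - c x)).
  assert (D : forall x,
    (floorR (v x) = floorR (p x) /\ fracR (v x) = lam * fracR (p x) /\ fracR (q x) < 1/2) \/
    (floorR (v x) = floorR (p x) /\ fracR (v x) = 1 - lam + lam * fracR (p x) /\
      0 < fracR (p x) /\ 1/2 < fracR (q x))).
  { intro x. destruct (Hc x) as [k Hk]. destruct (Sf x) as [F Fz].
    unfold v. rewrite Hk. apply segment_clock; [exact F|exact Fz|rewrite <- Hk; apply Hcq|exact Hl]. }
  assert (Cross : forall x y, fracR (q x) < 1/2 -> 1/2 < fracR (q y) -> fracR (p x) < fracR (p y)).
  { intros x y Hx Hy. destruct (Rlt_or_le (fracR (p x)) (fracR (p y))) as [|Hle]; [assumption|].
    apply So in Hle. lra. }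
  apply (region_same_cell M r p); [exact (proj1 Hr)|exact Hp| |].
  - split.
    + intro x. pose proof (fracR_floor (p x)). pose proof (floorR_spec (p x)).
      destruct (D x) as [[F [Fv _]]|[F [Fv [Fp _]]]]; rewrite F, Fv;
        split; [reflexivity| |reflexivity|]; split; intro; nra.
    + intros x y.
      pose proof (fracR_floor (p x)). pose proof (floorR_spec (p x)).
      pose proof (fracR_floor (p y)). pose proof (floorR_spec (p y)).
      destruct (D x) as [[_ [Fx Qx]]|[_ [Fx [_ Qx]]]]; destruct (D y) as [[_ [Fy Qy]]|[_ [Fy [_ Qy]]]];
        rewrite Fx, Fy; [| pose proof (Cross x y Qx Qy) | pose proof (Cross y x Qy Qx) |];
        split; intro; nra.
  - intro x. unfold v. destruct (Hc x) as [k Hk]. rewrite Hk.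
    pose proof (pos_INR k). destruct Hr as [[b [_ Hb]] _]. apply Hb in Hp.
    pose proof (proj1 Hp x). nra.
Qed.

Definition small (u : valuation X) : Prop := forall x, Rabs (u x) < 1/2.

Definition addv (c u : valuation X) : valuation X := fun x => c x + u x.

Lemma same_cell_near_integral (c u u' : valuation X) :
  integral c -> small u -> small u' ->
  same_cell (addv c u) (addv c u') <-> order_equiv (with_pt u 0) (with_pt u' 0).
Proof.
  intros Hc Hu Hu'.
  assert (Fr : forall (w : valuation X) x k, small w -> c x = INR k ->
            fracR (addv c w x) = frac_small (w x)).
  { intros w x k Hw Hk. unfold addv. rewrite Hk. apply floor_frac_nat_add, Hw. }
  assert (Fl : forall x, floorR (addv c u x) = floorR (addv c u' x) <-> (0 <= u x <-> 0 <= u' x)).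
  { intro x. destruct (Hc x) as [k Hk]. unfold addv. rewrite Hk. apply nat_add_small_floor_eq; auto. }
  assert (Fz : forall (w : valuation X) x, small w -> fracR (addv c w x) = 0 <-> w x = 0).
  { intros w x Hw. destruct (Hc x) as [k Hk]. rewrite (Fr w x k Hw Hk). apply frac_small_eq0, Hw. }
  assert (Fo : forall x y, (0 <= u x <-> 0 <= u' x) -> (0 <= u y <-> 0 <= u' y) ->
            ((fracR (addv c u x) <= fracR (addv c u y) <-> fracR (addv c u' x) <= fracR (addv c u' y))
             <-> (u x <= u y <-> u' x <= u' y))).
  { intros x y Sx Sy. destruct (Hc x) as [kx Hx]. destruct (Hc y) as [ky Hy].
    rewrite (Fr u x kx Hu Hx), (Fr u y ky Hu Hy), (Fr u' x kx Hu' Hx), (Fr u' y ky Hu' Hy).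
    apply frac_small_order; auto. }
  split.
  - intros [Sf So].
    assert (S0 : forall x, 0 <= u x <-> 0 <= u' x) by (intro x; apply Fl, Sf).
    assert (Z0 : forall x, u x = 0 <-> u' x = 0).
    { intro x. rewrite <- (Fz u x Hu), <- (Fz u' x Hu'). apply Sf. }
    intros [x|] [y|]; simpl.
    + apply Fo; auto.
    + specialize (S0 x). specialize (Z0 x). intuition lra.
    + apply S0.
    + split; intro; lra.
  - intro E.
    assert (S0 : forall x, 0 <= u x <-> 0 <= u' x) by (intro x; exact (E None (Some x))).
    assert (S1 : forall x, u x <= 0 <-> u' x <= 0) by (intro x; exact (E (Some x) None)).
    split.
    + intro x. split; [apply Fl, S0|]. rewrite (Fz u x Hu), (Fz u' x Hu').
      specialize (S0 x). specialize (S1 x). intuition lra.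
    + intros x y. apply Fo; auto. exact (E (Some x) (Some y)).
Qed.

Lemma region_shift (M : nat) (r : region X) (c u u' : valuation X) :
  is_region M r -> integral c -> small u -> small u' ->
  order_equiv (with_pt u 0) (with_pt u' 0) -> r (addv c u) -> r (addv c u').
Proof.
  intros Hr Hc Hu Hu' E Hcu.
  apply (region_same_cell M r (addv c u)); [exact Hr|exact Hcu|apply same_cell_near_integral; assumption|].
  intro x. unfold addv. destruct (Hc x) as [k Hk]. rewrite Hk.
  assert (N : 0 <= INR k + u x).
  { destruct Hr as [b [_ Hb]]. apply Hb in Hcu. pose proof (proj1 Hcu x) as N.
    unfold addv in N. rewrite Hk in N. exact N. }
  pose proof (Rabs_def2 _ _ (Hu' x)).
  destruct (Rle_dec 0 (u' x)) as [|Hneg]; [pose proof (pos_INR k); lra|].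
  assert (Hux : ~ 0 <= u x) by (intro; apply Hneg, (E None (Some x)); assumption).
  assert (Hk1 : 1 <= INR k).
  { destruct k as [|k]; [simpl in N; lra|]. rewrite S_INR. pose proof (pos_INR k). lra. }
  lra.
Qed.

(* Scaling a step v -(e)-> v + e of r -> r2 towards the corners c -> c + d by the
   factor 1 / (4 (M + 1)) yields a step of the same shape within 1/4 of them. *)
Lemma corner_reach (M : nat) (r r2 : region X) (c v : valuation X) (d e : R) :
  bounded_region M r -> bounded_region M r2 -> corner r c -> corner r2 (elapse c d) ->
  r v -> 0 <= e -> r2 (elapse v e) ->
  exists (g : valuation X) (h : R),
    r (addv c g) /\ r2 (addv (elapse c d) (fun x => g x + h)) /\
    (forall x, Rabs (g x) <= 1/4) /\ (forall x, Rabs (g x + h) <= 1/4) /\ (d = 0 -> 0 <= h).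
Proof.
  intros Hr Hr2 Hc Hc2 Hv He Hve.
  pose proof (pos_INR M).
  set (lam := 1 / (4 * (INR M + 1))).
  assert (Elam : lam * (INR M + 1) = 1/4) by (unfold lam; field; lra).
  assert (Hlam0 : 0 < lam) by (unfold lam; apply Rdiv_lt_0_compat; lra).
  assert (Hlam : 0 < lam <= 1) by nra.
  assert (Eh : forall x, lam * (v x - c x) + lam * (e - d) = lam * (elapse v e x - elapse c d x))
    by (intro x; unfold elapse; ring).
  exists (fun x => lam * (v x - c x)), (lam * (e - d)).
  split; [|split; [|split; [|split]]].
  - exact (corner_segment M r c v lam Hr Hc Hv Hlam).
  - replace (addv (elapse c d) _)
      with (fun x => elapse c d x + lam * (elapse v e x - elapse c d x));
      [exact (corner_segment M r2 _ _ lam Hr2 Hc2 Hve Hlam)|].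
    apply functional_extensionality. intro x. unfold addv. rewrite Eh. reflexivity.
  - intro x. rewrite <- Elam. apply Rabs_scale_le; [lra|].
    exact (closure_dist M r c v Hr (proj1 Hc) Hv x).
  - intro x. rewrite Eh, <- Elam. apply Rabs_scale_le; [lra|].
    exact (closure_dist M r2 _ _ Hr2 (proj1 Hc2) Hve x).
  - intro Hd. subst d. nra.
Qed.

Lemma corner_step_shadow (M : nat) (clocks : list X) (r r2 : region X)
  (c v g : valuation X) (d e kp : R) :
  (forall x, In x clocks) ->
  bounded_region M r -> bounded_region M r2 -> corner r c -> corner r2 (elapse c d) ->
  (d = 0 \/ 1 <= d) -> r v -> 0 <= e -> r2 (elapse v e) ->
  0 < kp -> 3 * kp <= 1/4 -> r (addv c g) -> (forall x, Rabs (g x) <= kp) ->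
  exists h, Rabs h <= 2 * kp /\ 0 <= d + h /\ r2 (elapse (addv c g) (d + h)).
Proof.
  intros Hcl Hr Hr2 Hc Hc2 Hd Hv He Hve Hkp Hkp3 Hg Hgb.
  destruct (corner_reach M r r2 c v d e Hr Hr2 Hc Hc2 Hv He Hve)
    as [g' [h' [Hg' [Hr2' [Bg' [Bu' Hh']]]]]].
  assert (Sg : small g) by (intro x; pose proof (Hgb x); lra).
  assert (Sg' : small g') by (intro x; pose proof (Bg' x); lra).
  assert (E : order_equiv (with_pt g 0) (with_pt g' 0)).
  { apply (same_cell_near_integral c g g' (proj2 Hc) Sg Sg').
    exact (bounded_region_same_cell M r _ _ Hr Hg Hg'). }
  destruct (order_equiv_extend (None :: map Some clocks) (with_pt g 0) (with_pt g' 0) kp (- h'))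
    as [a [Ha Ea]]; [intros [x|]; [right; apply in_map, Hcl|left; reflexivity]
                    |exact Hkp|intros [x|]; simpl; [apply Hgb|rewrite Rabs_R0; lra]|exact E|].
  assert (E' : order_equiv (with_pt (fun x => g' x + h') 0) (with_pt (fun x => g x + - a) 0)).
  { apply (order_equiv_reindex _ _ _ _ (option_map Some) (- h') a (order_equiv_sym _ _ Ea));
      intros [x|]; simpl; ring. }
  exists (- a). rewrite Rabs_Ropp. split; [exact Ha|]. split.
  - pose proof (Rabs_le_bounds _ _ Ha).
    destruct Hd as [Hd|Hd]; [|lra].
    assert (a <= 0) by (apply (Ea None (Some None)); simpl; specialize (Hh' Hd); lra). lra.
  - replace (elapse (addv c g) (d + - a)) with (addv (elapse c d) (fun x => g x + - a))
      by (apply functional_extensionality; intro x; unfold addv, elapse; ring).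
    apply (region_shift M r2 (elapse c d) (fun x => g' x + h')); auto.
    + exact (proj1 Hr2).
    + exact (proj2 Hc2).
    + intro x. pose proof (Bu' x). lra.
    + intro x. eapply Rle_lt_trans; [apply Rabs_triang|]. rewrite Rabs_Ropp.
      pose proof (Hgb x). lra.
Qed.

End Cells.

Lemma integral_delay {X : Type} (x0 : X) (c : valuation X) (d : R) :
  integral c -> integral (elapse c d) -> 0 <= d -> d = 0 \/ 1 <= d.
Proof.
  intros Hc Hcd Hd. destruct (Hc x0) as [k1 K1]. destruct (Hcd x0) as [k2 K2].
  unfold elapse in K2.
  destruct (le_lt_dec k2 k1) as [Hle|Hlt].
  - left. apply le_INR in Hle. lra.
  - right. apply le_INR in Hlt. rewrite S_INR in Hlt. lra.
Qed.

Lemma guard_region_bounded {X St : Type} (G : wtg X St) (tr : trans X St) (r : region X) :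
  well_formed G -> In tr (Defs.Delta G) -> is_region (Defs.bound G) r ->
  (forall v, r v -> sat (tguard tr) v) -> bounded_region (Defs.bound G) r.
Proof.
  intros [_ HG] Htr Hr Hg. split; [exact Hr|]. intros v Hv. exact (HG tr Htr v (Hg v Hv)).
Qed.

Lemma cycle_regions_bounded {X St : Type} (G : wtg X St) (n : nat) (s : nat -> St)
  (r : nat -> region X) (t : nat -> trans X St) (nub : nat -> valuation X) (db : nat -> R) :
  well_formed G -> n <> 0%nat -> is_cycle G n s r t -> follows_corners G n r t nub db ->
  forall i, (i <= n)%nat -> bounded_region (Defs.bound G) (r i).
Proof.
  intros HG Hn [Hreg [Htr [_ Hrn]]] Hcor.
  assert (Hsucc : forall j, (j < n)%nat -> bounded_region (Defs.bound G) (r (S j))).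
  { intros j Hj. split; [apply Hreg; lia|].
    destruct (Hcor j Hj) as [r2 [Hr2 [_ [Hg [Hiff _]]]]].
    destruct (guard_region_bounded G (t j) r2 HG (proj1 (Htr j Hj)) Hr2 Hg) as [_ B2].
    intros v Hv x. apply Hiff in Hv as [w [Hw ->]]. unfold reset.
    destruct (treset (t j) x); [apply pos_INR|exact (B2 w Hw x)]. }
  intros [|j] Hj; [|apply Hsucc; lia].
  destruct n as [|m]; [contradiction|]. rewrite <- Hrn. apply Hsucc. lia.
Qed.

Section ShadowPlay.
Variables (X St : Type) (G : wtg X St) (clocks : list X) (x0 : X).
Hypothesis Hclocks : forall x, In x clocks.
Hypothesis HG : well_formed G.
Variables (n : nat) (s : nat -> St) (r : nat -> region X) (t : nat -> trans X St).
Variables (nub : nat -> valuation X) (db : nat -> R).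
Hypothesis Hbounded : forall i, (i <= n)%nat -> bounded_region (Defs.bound G) (r i).
Hypothesis Hplay : is_play G true n s t nub db.
Hypothesis Hcorners : follows_corners G n r t nub db.
Variable kp : R.
Hypothesis Hkp : 0 < kp.
Hypothesis Hkpn : kp * 3 ^ n <= 1/4.

Let tol (k : nat) : R := kp * 3 ^ k.

Definition next_val (k : nat) (v : valuation X) (h : R) : valuation X :=
  reset (elapse v (db k + h)) (treset (t k)).

Definition shadow_ok (k : nat) (v : valuation X) (h : R) : Prop :=
  Rabs h <= 2 * tol k /\
  step G false (s k) v (db k + h) (t k) (s (S k)) (next_val k v h) /\
  r (S k) (next_val k v h) /\
  forall x, Rabs (next_val k v h x - nub (S k) x) <= tol (S k).

Lemma tol_le (k : nat) : (k <= n)%nat -> 0 < tol k <= 1/4.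
Proof.
  intro Hk. unfold tol. split; [apply Rmult_lt_0_compat; [lra|apply pow_lt; lra]|].
  eapply Rle_trans; [|exact Hkpn]. apply Rmult_le_compat_l; [lra|apply Rle_pow; [lra|exact Hk]].
Qed.

Lemma shadow_step (k : nat) (v : valuation X) :
  (k < n)%nat -> r k v -> (forall x, Rabs (v x - nub k x) <= tol k) -> exists h, shadow_ok k v h.
Proof.
  intros Hk Hv Hclose.
  destruct (Hcorners k Hk)
    as [r2 [Hr2 [[w [e [Hw [He Hwe]]]] [Hguard [Hreset [Hcl1 [Hcl2 [_ [Hi1 [Hi2 _]]]]]]]]]].
  destruct (Hplay k Hk) as [Hin [Hsrc [Hdst [Hdb [_ Hnext]]]]].
  pose proof (guard_region_bounded G (t k) r2 HG Hin Hr2 Hguard) as Hb2.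
  assert (HtolS : tol (S k) = 3 * tol k) by (unfold tol; simpl; ring).
  pose proof (tol_le k ltac:(lia)) as Htol. pose proof (tol_le (S k) Hk) as Htol3.
  set (g := fun x => v x - nub k x).
  assert (Eg : addv (nub k) g = v)
    by (apply functional_extensionality; intro; unfold addv, g; ring).
  destruct (corner_step_shadow (Defs.bound G) clocks (r k) r2 (nub k) w g (db k) e (tol k) Hclocks
              (Hbounded k ltac:(lia)) Hb2 (conj Hcl1 Hi1) (conj Hcl2 Hi2)
              (integral_delay x0 _ _ Hi1 Hi2 (Rge_le _ _ Hdb)) Hw (Rge_le _ _ He) Hwe
              (proj1 Htol) ltac:(lra) ltac:(rewrite Eg; exact Hv) Hclose)
    as [h [Hh [Hdh Hr2h]]].
  rewrite Eg in Hr2h.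
  exists h. split; [exact Hh|]. split; [|split].
  - exact (conj Hin (conj Hsrc (conj Hdst (conj (Rle_ge _ _ Hdh) (conj (Hguard _ Hr2h) eq_refl))))).
  - apply Hreset. exists (elapse v (db k + h)). split; [exact Hr2h|reflexivity].
  - intro x. unfold next_val. rewrite Hnext. unfold reset, elapse.
    destruct (treset (t k) x).
    + unfold Rminus. rewrite Rplus_opp_r, Rabs_R0. lra.
    + replace (v x + (db k + h) - (nub k x + db k)) with ((v x - nub k x) + h) by ring.
      eapply Rle_trans; [apply Rabs_triang|]. pose proof (Hclose x). lra.
Qed.

Variable nu0 : valuation X.
Hypothesis Hnu0 : r 0%nat nu0.
Hypothesis Hnu0_close : forall x, Rabs (nu0 x - nub 0%nat x) <= kp.

Definition correction (k : nat) (v : valuation X) : R := epsilon (inhabits 0) (shadow_ok k v).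

Fixpoint shadow (k : nat) : valuation X :=
  match k with
  | O => nu0
  | S k => next_val k (shadow k) (correction k (shadow k))
  end.

Lemma shadow_spec (k : nat) : (k <= n)%nat ->
  r k (shadow k) /\ forall x, Rabs (shadow k x - nub k x) <= tol k.
Proof.
  induction k as [|k IH]; intro Hk.
  - split; [exact Hnu0|]. intro x. unfold tol. rewrite pow_O, Rmult_1_r. apply Hnu0_close.
  - destruct (IH ltac:(lia)) as [Hr Hd].
    destruct (epsilon_spec (inhabits 0) _ (shadow_step k (shadow k) ltac:(lia) Hr Hd))
      as [_ [_ [Hr' Hd']]].
    split; [exact Hr'|exact Hd'].
Qed.

Lemma shadow_play_exists : exists (nu : nat -> valuation X) (d : nat -> R),
  is_play G false n s t nu d /\ follows n r nu /\
  forall i, (i < n)%nat -> Rabs (d i - db i) <= 2 * (kp * 3 ^ n).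
Proof.
  exists shadow, (fun i => db i + correction i (shadow i)).
  assert (Hok : forall i, (i < n)%nat -> shadow_ok i (shadow i) (correction i (shadow i))).
  { intros i Hi. destruct (shadow_spec i ltac:(lia)) as [Hr Hd].
    exact (epsilon_spec _ _ (shadow_step i _ Hi Hr Hd)). }
  split; [|split].
  - intros i Hi. exact (proj1 (proj2 (Hok i Hi))).
  - intros i Hi. exact (proj1 (shadow_spec i Hi)).
  - intros i Hi. destruct (Hok i Hi) as [Hh _].
    replace (db i + correction i (shadow i) - db i) with (correction i (shadow i)) by ring.
    assert (tol i <= kp * 3 ^ n).
    { unfold tol. apply Rmult_le_compat_l; [lra|apply Rle_pow; [lra|lia]]. }
    lra.
Qed.

End ShadowPlay.

Fixpoint rate_abs_sum {X St : Type} (G : wtg X St) (n : nat) (s : nat -> St) : R :=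
  match n with
  | O => 0
  | S m => rate_abs_sum G m s + Rabs (IZR (wstate G (s m)))
  end.

Lemma rate_abs_sum_nonneg {X St : Type} (G : wtg X St) (n : nat) (s : nat -> St) :
  0 <= rate_abs_sum G n s.
Proof. induction n as [|n IH]; simpl; [lra|]. pose proof (Rabs_pos (IZR (wstate G (s n)))). lra. Qed.

Lemma play_weight_delay_close {X St : Type} (G : wtg X St) (n : nat) (s : nat -> St)
  (t : nat -> trans X St) (d d' : nat -> R) (delta : R) :
  (forall i, (i < n)%nat -> Rabs (d i - d' i) <= delta) ->
  Rabs (play_weight G n s t d - play_weight G n s t d') <= delta * rate_abs_sum G n s.
Proof.
  induction n as [|n IH]; intro Hd; simpl.
  - unfold Rminus. rewrite Rplus_opp_r, Rabs_R0. lra.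
  - set (w := IZR (wstate G (s n))).
    replace (play_weight G n s t d + (d n * w + IZR (wtrans G (t n))) -
             (play_weight G n s t d' + (d' n * w + IZR (wtrans G (t n)))))
      with ((play_weight G n s t d - play_weight G n s t d') + (d n - d' n) * w) by ring.
    eapply Rle_trans; [apply Rabs_triang|]. rewrite Rabs_mult, Rmult_plus_distr_l.
    pose proof (IH (fun i Hi => Hd i (Nat.lt_lt_succ_r _ _ Hi))).
    pose proof (Rmult_le_compat_r _ _ _ (Rabs_pos w) (Hd n (Nat.lt_succ_diag_r n))).
    lra.
Qed.

Lemma no_clocks_sat {X : Type} (g : guard X) (v : valuation X) : (X -> False) -> sat g v.
Proof. intros HX [[x o] c] _. destruct (HX x). Qed.

Lemma no_clocks_open_play {X St : Type} (G : wtg X St) (n : nat) (s : nat -> St)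
  (t : nat -> trans X St) (nu : nat -> valuation X) (d : nat -> R) :
  (X -> False) -> is_play G true n s t nu d -> is_play G false n s t nu d.
Proof.
  intros HX Hplay i Hi. destruct (Hplay i Hi) as [H1 [H2 [H3 [H4 [_ H6]]]]].
  exact (conj H1 (conj H2 (conj H3 (conj H4 (conj (no_clocks_sat _ _ HX) H6))))).
Qed.

Lemma no_clocks_region {X : Type} (M : nat) (r : region X) (v : valuation X) :
  (X -> False) -> is_region M r -> r v.
Proof.
  intros HX [b [_ Hr]]. apply Hr.
  split; [intro x; destruct (HX x)|]. split; intro x; destruct (HX x).
Qed.

Lemma region_inhabited {X : Type} (M : nat) (r : region X) : is_region M r -> exists v, r v.
Proof.
  intros [b [Hb Hr]]. exists b. apply Hr. split; [exact Hb|].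
  split; [intro x; right; split; [reflexivity|tauto]|intros; tauto].
Qed.

Lemma open_play_delays_close {X St : Type} (G : wtg X St) (clocks : list X) (x0 : X)
  (n : nat) (s : nat -> St) (r : nat -> region X) (t : nat -> trans X St)
  (nub : nat -> valuation X) (db : nat -> R) (delta : R) :
  (forall x, In x clocks) -> well_formed G -> n <> 0%nat -> is_cycle G n s r t ->
  is_play G true n s t nub db -> follows_corners G n r t nub db -> corner (r O) (nub O) ->
  0 < delta ->
  exists (nu : nat -> valuation X) (d : nat -> R),
    is_play G false n s t nu d /\ follows n r nu /\
    forall i, (i < n)%nat -> Rabs (d i - db i) <= delta.
Proof.
  intros Hclocks HG Hn0 Hcyc Hplay Hcorners H0 Hdelta.
  pose proof (pow_lt 3 n ltac:(lra)) as H3n.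
  set (m := Rmin delta (1/2)).
  assert (Hm : 0 < m <= delta /\ m <= 1/2)
    by (split; [split; [apply Rmin_glb_lt; lra|apply Rmin_l]|apply Rmin_r]).
  set (kp := m / (2 * 3 ^ n)).
  assert (Ekp : kp * 3 ^ n = m / 2) by (unfold kp; field; lra).
  assert (Hkp : 0 < kp) by (unfold kp; apply Rdiv_lt_0_compat; lra).
  destruct (proj1 H0 kp (Rlt_gt _ _ Hkp)) as [nu0 [Hnu0 Hclose]].
  destruct (shadow_play_exists X St G clocks x0 Hclocks HG n s r t nub db
              (cycle_regions_bounded G n s r t nub db HG Hn0 Hcyc Hcorners)
              Hplay Hcorners kp Hkp ltac:(lra) nu0 Hnu0
              ltac:(intro x; rewrite Rabs_minus_sym; apply Rlt_le, Hclose))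
    as [nu [d [Hnu [Hfol Hd]]]].
  exists nu, d. split; [exact Hnu|split; [exact Hfol|]].
  intros i Hi. specialize (Hd i Hi). lra.
Qed.

Theorem lemma1 (X St : Type) (G : wtg X St)
  (HX : exists l : list X, forall x, In x l)
  (HG : well_formed G)
  (n : nat) (s : nat -> St) (r : nat -> region X) (t : nat -> trans X St)
  (Hcyc : is_cycle G n s r t)
  (nub : nat -> valuation X) (db : nat -> R)
  (Hplay : is_play G true n s t nub db)
  (Hcorners : follows_corners G n r t nub db)
  (H0 : corner (r O) (nub O)) (Hn : corner (r O) (nub n)) :
  forall eps, eps > 0 ->
    exists (nu : nat -> valuation X) (d : nat -> R),
      is_play G false n s t nu d /\ follows n r nu /\
      Rabs (play_weight G n s t d - play_weight G n s t db) <= eps.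
Proof.
  intros eps Heps.
  assert (Hzero : Rabs (play_weight G n s t db - play_weight G n s t db) <= eps)
    by (unfold Rminus; rewrite Rplus_opp_r, Rabs_R0; lra).
  destruct HX as [[|x0 clocks] Hclocks].
  { exists nub, db. split; [exact (no_clocks_open_play G n s t nub db Hclocks Hplay)|].
    split; [|exact Hzero]. intros i Hi. exact (no_clocks_region _ _ _ Hclocks (proj1 Hcyc i Hi)). }
  destruct (Nat.eq_dec n 0) as [->|Hn0].
  { destruct (region_inhabited _ _ (proj1 Hcyc 0%nat (le_n 0))) as [b Hb].
    exists (fun _ => b), db. split; [intros i Hi; lia|split; [|exact Hzero]].
    intros i Hi. replace i with 0%nat by lia. exact Hb. }
  pose proof (rate_abs_sum_nonneg G n s) as HS0.
  set (delta := eps / (rate_abs_sum G n s + 1)).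
  assert (Edelta : delta * (rate_abs_sum G n s + 1) = eps) by (unfold delta; field; lra).
  assert (Hdelta : 0 < delta) by (unfold delta; apply Rdiv_lt_0_compat; lra).
  destruct (open_play_delays_close G (x0 :: clocks) x0 n s r t nub db delta
              Hclocks HG Hn0 Hcyc Hplay Hcorners H0 Hdelta) as [nu [d [Hnu [Hfol Hd]]]].
  exists nu, d. split; [exact Hnu|split; [exact Hfol|]].
  eapply Rle_trans; [exact (play_weight_delay_close G n s t d db delta Hd)|]. nra.
Qed.
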